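(* For all integers $n_1,n_2\ge0$, \[ \zeta(-2n_1-1,0,-2n_2-1|1)=-\zeta(-2n_1-1,-2n_2-1|1). \]
   Context: Normalized multiple Bernoulli polynomials: for integers $k\ge0$, $\zeta(-k|z)=-\frac{B_{k+1}(z)}{k+1}$ ($B_n(z)$ the Bernoulli polynomials, $B_n=B_n(0)$), and for $r\ge2$, $k_j\ge0$, $\zeta(-k_1,\ldots,-k_r|z)=-\frac{1}{k_r+1}\zeta(-k_1,\ldots,-k_{r-2},-k_{r-1}-k_r-1|z)-\frac12\zeta(-k_1,\ldots,-k_{r-2},-k_{r-1}-k_r|z)+\sum_{q=1}^{k_r}(-k_r)_q\frac{B_{q+1}}{(q+1)!}\zeta(-k_1,\ldots,-k_{r-2},-k_{r-1}-k_r+q|z)$, with $(a)_q=a(a+1)\cdots(a+q-1)$. *)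

From mathcomp Require Import all_boot all_order all_algebra.
Set Implicit Arguments. Unset Strict Implicit. Unset Printing Implicit Defensive.
Import Order.TTheory GRing.Theory Num.Theory.
Local Open Scope ring_scope.

Section MultiBernoulli.
Variable R : numFieldType.

(* bern_seq n = [:: B_0; ...; B_n], Bernoulli numbers with B_1 = -1/2,
   defined by B_0 = 1 and sum_{k=0}^{n} C(n+1,k) B_k = 0 for n >= 1. *)
Fixpoint bern_seq (n : nat) : seq R :=
  match n with
  | 0 => [:: 1]
  | n'.+1 => let s := bern_seq n' in
      rcons s (- (n'.+2%:R)^-1 * \sum_(k < n'.+1) 'C(n'.+2, k)%:R * s`_k)
  end.

Definition bernoulli (n : nat) : R := (bern_seq n)`_n.

Definition bernoulli_poly (n : nat) (z : R) : R :=
  \sum_(k < n.+1) 'C(n, k)%:R * bernoulli k * z ^+ (n - k).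

Definition pochhammer (a : R) (q : nat) : R := \prod_(i < q) (a + i%:R).

(* mzeta_rev z rest k = zeta(-k_1,...,-k_{r-1},-k | z) where
   rest = [:: k_{r-1}; ...; k_1] (reversed prefix). *)
Fixpoint mzeta_rev (z : R) (rest : seq nat) (k : nat) : R :=
  match rest with
  | [::] => - bernoulli_poly k.+1 z / k.+1%:R
  | k' :: rest' =>
      - (k.+1%:R)^-1 * mzeta_rev z rest' (k' + k).+1
      - 2^-1 * mzeta_rev z rest' (k' + k)
      + \sum_(1 <= q < k.+1)
          pochhammer (- k%:R) q * bernoulli q.+1 / (q.+1)`!%:R
            * mzeta_rev z rest' (k' + k - q)
  end.

End MultiBernoulli.

(* mzeta [:: k_1; ...; k_r] z = zeta(-k_1, ..., -k_r | z)  (r >= 1);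
   the empty list (r = 0) is given the junk value 0. *)
Definition mzeta (R : numFieldType) (ks : seq nat) (z : R) : R :=
  match rev ks with
  | [::] => 0
  | k :: rest => mzeta_rev z rest k
  end.

(* Write a = 2 n1 + 1, k = 2 n2 + 1 and f m = zeta(-a, -m | 1). The defining recursion is a
   binomial sum with weights (-1)^j B_j, so both sides are expressed through f, and since
   (-1)^j B_j = B_j + [j = 1] (the odd Bernoulli numbers beyond B_1 vanish) the identity
   reduces to  sum_j C(k+1, j) B_j f(k+1-j) = 0.  Unfolding f once more turns this sum into
   -1/N sum_(i, j <= N) C(N, j) C(N-j, i) B_j (-1)^i B_i zeta(-(a+N-j-i) | 1), N = k + 2,
   whose summand is antisymmetric in (i, j): for i + j odd the signs (-1)^i and (-1)^j
   cancel, and for i + j even a + N - j - i is even and positive, where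
   zeta(-n | 1) = - B_(n+1) / (n+1) vanishes. *)

From mathcomp Require Import all_boot all_order all_algebra.
From mathcomp Require Import ring zify.
Set Implicit Arguments. Unset Strict Implicit. Unset Printing Implicit Defensive.
Import GRing.Theory Num.Theory.
Local Open Scope ring_scope.

Lemma mul_bin_sub m j k : (k <= j)%N -> (j <= m)%N ->
  ('C(m, j) * 'C(j, k) = 'C(m, k) * 'C(m - k, j - k))%N.
Proof.
move=> kj jm; have km : (k <= m)%N by apply: leq_trans jm.
have facts_gt0 : (0 < k`! * (j - k)`! * (m - j)`!)%N by rewrite !muln_gt0 !fact_gt0.
apply/eqP; rewrite -(eqn_pmul2r facts_gt0); apply/eqP.
have -> : (m - j = (m - k) - (j - k))%N by rewrite subnBA // subnK.
have jk : (j - k <= m - k)%N by apply: leq_sub2r.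
transitivity m`!.
  rewrite -(bin_fact jm) -(bin_fact kj) subnBA // subnK //; ring.
by rewrite -(bin_fact km) -(bin_fact jk); ring.
Qed.

Lemma mul_bin_small N j i : (N < j + i)%N -> ('C(N, j) * 'C(N - j, i) = 0)%N.
Proof.
move=> lt_N; case: (leqP j N) => jN; last by rewrite bin_small.
by rewrite (@bin_small (N - j) i) ?muln0 //; lia.
Qed.

Lemma mul_binC N j i : ('C(N, j) * 'C(N - j, i) = 'C(N, i) * 'C(N - i, j))%N.
Proof.
case: (leqP (j + i) N) => ijN; last by rewrite !mul_bin_small // addnC.
have := mul_bin_sub (leq_addr i j) ijN; rewrite addKn => <-.
have := mul_bin_sub (leq_addl j i) ijN; rewrite addnK => <-.
by rewrite -(bin_sub (leq_addr i j)) addKn.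
Qed.

Section BinomialSums.
Variable R : comPzRingType.

Lemma sum_ord_widen0 n m (F : nat -> R) : (n <= m)%N ->
  (forall i, (n < i)%N -> F i = 0) -> \sum_(i < n.+1) F i = \sum_(i < m.+1) F i.
Proof.
move=> nm F0; rewrite (big_ord_widen m.+1 F) // big_mkcond; apply: eq_bigr => i _.
by case: ifP => // /negbT; rewrite -leqNgt => /F0.
Qed.

Lemma sum_mul_eq1 m (F : nat -> R) : (1 < m)%N ->
  \sum_(j < m) F j * (j == 1%N :> nat)%:R = F 1%N.
Proof.
case: m => [|[|m]] // _; rewrite 2!big_ord_recl big1 /=.
  by rewrite mulr0 mulr1 add0r addr0.
by move=> i _; rewrite mulr0.
Qed.

Lemma sum_alt_mul_bin m k : (k <= m)%N ->
  \sum_(j < m.+1) ('C(m, j) * 'C(j, k))%:R * (-1) ^+ j = (-1) ^+ k * (m == k)%:R :> R.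
Proof.
move=> km; rewrite -(big_mkord xpredT (fun j => ('C(m, j) * 'C(j, k))%:R * (-1) ^+ j))
  (big_cat_nat _ (n := k)) //=; last by rewrite ltnW.
rewrite big_nat big1 ?add0r; last first.
  by move=> i /andP [_ ik]; rewrite (bin_small ik) muln0 mul0r.
rewrite -{1}[k]add0n big_addn subSn // big_mkord.
have bin_shift (i : 'I_(m - k).+1) :
    ('C(m, i + k) * 'C(i + k, k) = 'C(m, k) * 'C(m - k, i))%N.
  by rewrite mul_bin_sub ?leq_addl ?addnK //; have := ltn_ord i; lia.
under eq_bigr => i _ do rewrite bin_shift natrM addnC exprD mulrACA.
rewrite -mulr_sumr.
have -> : \sum_(i < (m - k).+1) 'C(m - k, i)%:R * (-1) ^+ i = (1 - 1 : R) ^+ (m - k).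
  by rewrite exprDn; apply: eq_bigr => i _; rewrite expr1n mul1r mulr_natl.
rewrite subrr expr0n subn_eq0; have [->|mk] := eqVneq m k.
  by rewrite leqnn binn mul1r mulrC.
by rewrite leqNgt ltn_neqAle eq_sym mk km /= !mulr0.
Qed.

Lemma binomial_inversion (x : nat -> R) m :
  \sum_(j < m.+1) 'C(m, j)%:R * (-1) ^+ j * (\sum_(k < j.+1) 'C(j, k)%:R * x k)
  = (-1) ^+ m * x m.
Proof.
have widen (j : 'I_m.+1) :
    \sum_(k < j.+1) 'C(j, k)%:R * x k = \sum_(k < m.+1) 'C(j, k)%:R * x k.
  apply: (sum_ord_widen0 (F := fun k => 'C(j, k)%:R * x k)) => [|k jk].
    exact: leq_ord.
  by rewrite bin_small ?mul0r.
have column (k : 'I_m.+1) :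
    \sum_(j < m.+1) 'C(m, j)%:R * (-1) ^+ j * ('C(j, k)%:R * x k)
    = x k * ((-1) ^+ k * (m == k)%:R).
  rewrite -sum_alt_mul_bin ?leq_ord // mulr_sumr; apply: eq_bigr => j _.
  by rewrite natrM; ring.
under eq_bigr => j _ do rewrite widen mulr_sumr.
rewrite exchange_big /=; under eq_bigr => k _ do rewrite column.
rewrite big_ord_recr /= eqxx big1 ?add0r; first by rewrite mulr1 mulrC.
by move=> k _; rewrite eq_sym (ltn_eqF (ltn_ord k)) !mulr0.
Qed.

End BinomialSums.

Section Bernoulli.
Variable R : numFieldType.
Local Notation B := (@bernoulli R).

Lemma size_bern_seq n : size (bern_seq R n) = n.+1.
Proof. by elim: n => //= n IH; rewrite size_rcons IH. Qed.

Lemma nth_bern_seq n k : (k <= n)%N -> (bern_seq R n)`_k = B k.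
Proof.
move=> kn; rewrite /bernoulli -(subnKC kn).
elim: (n - k)%N => [|d IH]; first by rewrite addn0.
by rewrite addnS /= nth_rcons size_bern_seq ltnS leq_addr IH.
Qed.

Lemma bernoulli0 : B 0 = 1. Proof. by []. Qed.

Lemma bernoulliS n :
  B n.+1 = - (n.+2%:R)^-1 * \sum_(k < n.+1) 'C(n.+2, k)%:R * B k.
Proof.
rewrite {1}/bernoulli /= nth_rcons size_bern_seq ltnn eqxx.
by congr (_ * _); apply: eq_bigr => i _; rewrite nth_bern_seq // -ltnS.
Qed.

Lemma bernoulli1 : B 1 = - 2^-1.
Proof. by rewrite bernoulliS big_ord1 bin0 mul1r bernoulli0 mulr1. Qed.

Lemma sum_bin_bernoulli m :
  \sum_(k < m.+1) 'C(m, k)%:R * B k = B m + (m == 1%N)%:R.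
Proof.
case: m => [|[|n]].
- by rewrite big_ord1 bin0 mul1r addr0.
- by rewrite big_ord_recr big_ord1 /= bin0 binn !mul1r bernoulli0 addrC.
rewrite addr0 2!big_ord_recr /= binn binSn mul1r (bernoulliS n) mulrA mulrN.
by rewrite mulfV ?pnatr_eq0 // mulN1r addrN add0r.
Qed.

Lemma sum_alt_bin_bernoulli m :
  \sum_(j < m.+1) 'C(m, j)%:R * (-1) ^+ j * B j = (-1) ^+ m * B m + m%:R.
Proof.
have := binomial_inversion B m.
under eq_bigr => j _ do rewrite sum_bin_bernoulli mulrDr.
rewrite big_split /= => <-.
suff -> : \sum_(j < m.+1) 'C(m, j)%:R * (-1) ^+ j * (j == 1%N :> nat)%:R = - m%:R :> R.
  by rewrite subrK.
case: m => [|m]; first by rewrite big_ord1 mulr0 oppr0.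
by rewrite (sum_mul_eq1 (fun j => 'C(m.+1, j)%:R * (-1) ^+ j)) // bin1 expr1 mulrN1.
Qed.

Lemma bernoulli_reflect n : (1 < n)%N -> (-1) ^+ n * B n = B n.
Proof.
elim/ltn_ind: n => n IH n_ge2.
pose E k := (-1) ^+ k * B k - B k.
have E_lt j : (j < n)%N -> E j = (j == 1%N :> nat)%:R.
  case: j => [|[|j]] jn; rewrite /E.
  - by rewrite expr0 mul1r subrr.
  - rewrite expr1 bernoulli1 mulN1r !opprK /= -mulr2n -(mulr_natr (2^-1 : R) 2).
    by rewrite mulVf // pnatr_eq0.
  - by rewrite IH ?subrr.
(* Comparing the alternating and the plain binomial sums of B at n+1 leaves (n+1) E n = 0. *)
have sumE : \sum_(j < n.+2) 'C(n.+1, j)%:R * E j = E n.+1 + n.+1%:R.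
  under eq_bigr => j _ do rewrite mulrBr mulrA.
  rewrite sumrB sum_alt_bin_bernoulli sum_bin_bernoulli /= eqSS.
  by rewrite (gtn_eqF (ltnW n_ge2)) addr0 /E addrAC.
move: sumE; rewrite big_ord_recr /= binn mul1r addrC => /addrI.
rewrite big_ord_recr /= binSn.
rewrite (eq_bigr (fun i : 'I_n => 'C(n.+1, i)%:R * (i == 1%N :> nat)%:R)); last first.
  by move=> i _; rewrite E_lt.
rewrite (sum_mul_eq1 (fun i => 'C(n.+1, i)%:R)) // bin1.
rewrite -[X in _ + _ = X -> _]addr0 => /addrI/eqP.
by rewrite mulf_eq0 pnatr_eq0 /= /E subr_eq0 => /eqP.
Qed.

Lemma signr_bernoulli j : (-1) ^+ j * B j = B j + (j == 1%N :> nat)%:R.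
Proof.
case: j => [|[|j]].
- by rewrite expr0 mul1r addr0.
- by rewrite expr1 mulN1r bernoulli1 opprK /=; field.
- by rewrite bernoulli_reflect // addr0.
Qed.

Lemma bernoulli_odd n : odd n -> (1 < n)%N -> B n = 0.
Proof.
move=> n_odd n_gt1; have := bernoulli_reflect n_gt1.
rewrite -signr_odd n_odd expr1 mulN1r => /eqP.
by rewrite eq_sym -addr_eq0 -mulr2n mulrn_eq0 /= => /eqP.
Qed.

End Bernoulli.

Section MultipleBernoulli.
Variable R : numFieldType.
Local Notation B := (@bernoulli R).
Local Notation zeta1 := (@mzeta_rev R 1 [::]).

Lemma pochhammer_opp_nat k q : pochhammer (- k%:R : R) q = (-1) ^+ q * (k ^_ q)%:R.
Proof.
elim: q => [|q IH]; first by rewrite /pochhammer big_ord0 mul1r.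
rewrite /pochhammer big_ord_recr /= -/(pochhammer _ _) IH ffactnSr.
case: (leqP q k) => qk; first by rewrite natrM natrB // exprS; ring.
by rewrite ffact_small // !mulr0 mul0r.
Qed.

(* Since (-k)_q / (q+1)! = - (-1)^(q+1) C(k+1, q+1) / (k+1), the three terms of the
   recursion are the j = 0, j = 1 and j >= 2 parts of a single binomial sum. *)
Lemma mzeta_rev_cons (z : R) k' rest k :
  mzeta_rev z (k' :: rest) k = - (k.+1%:R)^-1 *
    \sum_(j < k.+2) 'C(k.+1, j)%:R * (-1) ^+ j * B j * mzeta_rev z rest ((k' + k).+1 - j).
Proof.
set g := mzeta_rev z rest.
rewrite /= -/g 2!big_ord_recl /= big_add1 /= big_mkord.
have -> : \sum_(i < k) pochhammer (- k%:R) i.+1 * B i.+2 / (i.+2)`!%:R * g (k' + k - i.+1)%N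
   = - k.+1%:R^-1 * \sum_(i < k) 'C(k.+1, i.+2)%:R * (-1) ^+ i.+2 * B i.+2
       * g ((k' + k).+1 - i.+2)%N.
  rewrite mulr_sumr; apply: eq_bigr => i _; rewrite pochhammer_opp_nat subSS.
  have fact_neq0 : (i.+2)`!%:R != 0 :> R by rewrite pnatr_eq0 -lt0n fact_gt0.
  have -> : 'C(k.+1, i.+2)%:R = (k.+1 * k ^_ i.+1)%:R / (i.+2)`!%:R :> R.
    by rewrite -ffactSS -bin_ffact natrM mulfK.
  rewrite natrM !exprS; field.
  by rewrite fact_neq0 /= addrC natr1 pnatr_eq0.
rewrite /bump /= bin0 bin1 expr0 expr1 subn0 subn1 /= bernoulli0 bernoulli1; field.
by rewrite addrC natr1 pnatr_eq0.
Qed.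

Lemma mzeta1_even n : ~~ odd n -> (0 < n)%N -> zeta1 n = 0.
Proof.
move=> n_even n_gt0; rewrite /= /bernoulli_poly.
under eq_bigr => i _ do rewrite expr1n mulr1.
rewrite sum_bin_bernoulli bernoulli_odd //= eqSS (gtn_eqF n_gt0).
by rewrite add0r oppr0 mul0r.
Qed.

Lemma sum_antisym_eq0 n (F : nat -> nat -> R) :
  (forall i j, F i j + F j i = 0) -> \sum_(i < n) \sum_(j < n) F i j = 0.
Proof.
move=> F_antisym; set S := (X in X = 0).
have : S + S = 0.
  rewrite {2}/S exchange_big /= /S -big_split /=.
  apply: big1 => i _; rewrite -big_split; apply: big1 => j _; exact: F_antisym.
by move/eqP; rewrite -mulr2n mulrn_eq0 /= => /eqP.
Qed.

Definition bernoulli_zeta_term a N j i : R :=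
  ('C(N, j) * 'C(N - j, i))%:R * (B j * ((-1) ^+ i * B i)) * zeta1 (a + (N - j - i)).

Lemma bernoulli_zeta_term_antisym a N j i : odd a -> odd N ->
  bernoulli_zeta_term a N j i + bernoulli_zeta_term a N i j = 0.
Proof.
move=> a_odd N_odd.
have -> : bernoulli_zeta_term a N j i + bernoulli_zeta_term a N i j =
    ('C(N, j) * 'C(N - j, i))%:R * (B i * B j) * ((-1) ^+ i + (-1) ^+ j)
    * zeta1 (a + (N - j - i)).
  by rewrite /bernoulli_zeta_term mul_binC subnAC; ring.
have [ijN|Nij] := leqP (j + i) N; last by rewrite mul_bin_small // !mul0r.
have [ij_odd|ij_even] := boolP (odd (i + j)).
  rewrite -(signr_odd _ i) -(signr_odd _ j); move: ij_odd; rewrite oddD.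
  by case: (odd i); case: (odd j) => //= _; rewrite ?addrN ?addNr mulr0 mul0r.
rewrite mzeta1_even ?mulr0 ?(ltn_addr _ (odd_gt0 a_odd)) //.
by rewrite oddD -subnDA oddB // a_odd N_odd addnC negbK.
Qed.

Lemma bin_bernoulli_mzeta2 a k j : (j <= k.+1)%N ->
  'C(k.+1, j)%:R * B j * mzeta_rev 1 [:: a] (k.+1 - j)
  = - (k.+2%:R)^-1 * \sum_(i < k.+3) bernoulli_zeta_term a k.+2 j i.
Proof.
move=> jk; set N := k.+2.
rewrite mzeta_rev_cons; have -> : (k.+1 - j).+1 = (N - j)%N by rewrite /N (subSn jk).
rewrite (@sum_ord_widen0 _ (N - j) N (fun i => 'C(N - j, i)%:R * (-1) ^+ i * B i *
  zeta1 ((a + (k.+1 - j)).+1 - i))); first last.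
- by move=> i ji; rewrite bin_small // !mul0r.
- exact: leq_subr.
rewrite mulrA mulr_sumr mulr_sumr; apply: eq_bigr => i _.
have [iNj|Nji] := leqP i (N - j); last first.
  by rewrite /bernoulli_zeta_term (bin_small Nji) muln0 !mul0r !mulr0.
have -> : ((a + (k.+1 - j)).+1 - i = a + (N - j - i))%N by move: iNj; rewrite /N; lia.
have Nj_neq0 : (N - j)%:R != 0 :> R by rewrite pnatr_eq0 -lt0n subn_gt0.
have -> : 'C(k.+1, j)%:R = ((N - j) * 'C(N, j))%:R / N%:R :> R.
  by rewrite -mul_bin_down natrM mulrAC mulfV ?mul1r // pnatr_eq0.
rewrite /bernoulli_zeta_term !natrM; field.
by rewrite Nj_neq0 pnatr_eq0.
Qed.

Lemma sum_bin_bernoulli_mzeta2 a k : odd a -> odd k ->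
  \sum_(j < k.+2) 'C(k.+1, j)%:R * B j * mzeta_rev 1 [:: a] (k.+1 - j) = 0.
Proof.
move=> a_odd k_odd; set F := bernoulli_zeta_term a k.+2.
under eq_bigr => j _ do rewrite (bin_bernoulli_mzeta2 _ (ltnSE (ltn_ord j))).
rewrite -mulr_sumr.
have -> : \sum_(j < k.+2) \sum_(i < k.+3) F j i = \sum_(j < k.+3) \sum_(i < k.+3) F j i.
  rewrite [RHS]big_ord_recr /= [X in _ = _ + X]big1 ?addr0 // => i _.
  rewrite /F /bernoulli_zeta_term (@bernoulli_odd R k.+2) ?mul0r ?mulr0 ?mul0r //.
  by rewrite /= negbK.
rewrite sum_antisym_eq0 ?mulr0 //.
by move=> j i; apply: bernoulli_zeta_term_antisym => //=; rewrite negbK.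
Qed.

End MultipleBernoulli.

Unset Implicit Arguments.

Theorem proposition3p5 (R : numFieldType) (n1 n2 : nat) :
  mzeta [:: (2 * n1).+1; 0%N; (2 * n2).+1]%N (1 : R)
  = - mzeta [:: (2 * n1).+1; (2 * n2).+1]%N (1 : R).
Proof.
set a := (2 * n1).+1; set k := (2 * n2).+1.
have a_odd : odd a by rewrite /= oddM.
have k_odd : odd k by rewrite /= oddM.
change (mzeta_rev (1 : R) [:: 0%N; a] k = - mzeta_rev (1 : R) [:: a] k).
rewrite mzeta_rev_cons add0n.
have := sum_bin_bernoulli_mzeta2 R a_odd k_odd.
move: (mzeta_rev 1 [:: a]) => f f_sum.
under eq_bigr => j _ do rewrite -(mulrA _ ((-1) ^+ j)) signr_bernoulli mulrDr mulrDl.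
rewrite big_split /= f_sum add0r.
rewrite 2!big_ord_recl big1 => [|i _]; last by rewrite mulr0 mul0r.
rewrite /= bin1 subSS subn0 !mulr0 !mul0r add0r addr0 mulr1.
by rewrite mulrA mulNr mulVf ?mulN1r // pnatr_eq0.
Qed.
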